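(* Let $\Theta\subseteq\mathbb{R}^p$ be convex, and let $f:\mathbb{R}^p\to\mathbb{R}$ be continuous and bounded below, such that for all $\theta,\theta'\in\Theta$ the directional derivative $\nabla f(\theta,\theta'-\theta)$ exists. Let $\theta_0\in\Theta$ and consider the sequence generated by: for $n\ge1$, choose a surrogate $g_n$ of $f$ and set $\theta_n\in\operatorname{arg\,min}_{\theta\in\Theta}g_n(\theta)$. Assume that for every $n\ge 1$, $g_n\in\mathcal{S}_L(f,\theta_{n-1})$ and that either all $g_n$ are majorant functions or all $g_n$ are $\rho$-strongly convex (for some $\rho>0$). Then $(f(\theta_n))_{n\ge0}$ is monotonically non-increasing and $(\theta_n)_{n\ge0}$ satisfies the asymptotic stationary point condition $$\liminf_{n\to+\infty}\ \inf_{\theta\in\Theta\setminus\{\theta_n\}}\frac{\nabla f(\theta_n,\theta-\theta_n)}{\|\theta-\theta_n\|_2}\ \ge 0.$$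
   Context: The directional derivative of $f$ at $\theta$ in direction $\theta'-\theta$ is $\nabla f(\theta,\theta'-\theta)\triangleq\lim_{t\to0^+}\frac{f(\theta+t(\theta'-\theta))-f(\theta)}{t}$. First-order surrogates: $g:\mathbb{R}^p\to\mathbb{R}$ belongs to $\mathcal{S}_L(f,\kappa)$ if (a) $g(\theta')\ge f(\theta')$ for all $\theta'\in\operatorname{arg\,min}_{\theta\in\Theta}g(\theta)$, and (b) $h\triangleq g-f$ is differentiable with $L$-Lipschitz gradient, $h(\kappa)=0$ and $\nabla h(\kappa)=0$. $g$ is called a majorant function if $g\ge f$ everywhere. The minimizers $\theta_n$ are assumed to exist. *)

From HB Require Import structures.
From mathcomp Require Import all_boot all_order all_algebra.
From mathcomp Require Import all_classical all_reals all_analysis.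
Set Implicit Arguments. Unset Strict Implicit. Unset Printing Implicit Defensive.
Import Order.TTheory GRing.Theory Num.Theory.
Import numFieldNormedType.Exports.
Local Open Scope classical_set_scope.
Local Open Scope ring_scope.

Section Defs.
Variables (R : realType) (p : nat).
Local Notation V := 'rV[R]_p.

Definition norm2 (v : V) : R := Num.sqrt (\sum_(i < p) v ord0 i ^+ 2).

Definition convex_set_rV (Theta : set V) : Prop :=
  forall x y t, Theta x -> Theta y -> 0 <= t <= 1 ->
    Theta ((1 - t) *: x + t *: y).

Definition dquot (f : V -> R) (x v : V) : R -> R :=
  fun t => (f (x + t *: v) - f x) / t.

Definition dirder_exists (f : V -> R) (x v : V) : Prop :=
  cvg (dquot f x v @ 0^'+).

Definition dirder (f : V -> R) (x v : V) : R := lim (dquot f x v @ 0^'+).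

Definition grad (h : V -> R) (x : V) : V :=
  \row_(j < p) ('d h x (delta_mx ord0 j : V) : R).

Definition argmin_on (Theta : set V) (g : V -> R) : set V :=
  [set th | Theta th /\ forall th', Theta th' -> g th <= g th'].

Definition first_order_surrogate (Theta : set V) (L : R) (f : V -> R)
    (kappa : V) (g : V -> R) : Prop :=
  (forall th', argmin_on Theta g th' -> f th' <= g th') /\
  let h := fun th => g th - f th in
  (forall x, differentiable h x) /\
  (forall x y, norm2 (grad h x - grad h y) <= L * norm2 (x - y)) /\
  h kappa = 0 /\ grad h kappa = 0.

Definition majorant (f g : V -> R) : Prop := forall th, f th <= g th.

Definition strongly_convex (rho : R) (g : V -> R) : Prop :=
  forall x y t, 0 <= t <= 1 ->
    g ((1 - t) *: x + t *: y) <=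
      (1 - t) * g x + t * g y - rho / 2 * t * (1 - t) * norm2 (x - y) ^+ 2.

End Defs.

From HB Require Import structures.
From mathcomp Require Import all_boot all_order all_algebra.
From mathcomp Require Import all_classical all_reals all_analysis.
From mathcomp Require Import ring lra.
Import Order.TTheory GRing.Theory Num.Theory.
Import numFieldNormedType.Exports.
Local Open Scope classical_set_scope.
Local Open Scope ring_scope.

(* Write h_n = g_n - f. Monotonicity is the sandwich
   f(θ_{n+1}) <= g_{n+1}(θ_{n+1}) <= g_{n+1}(θ_n) = f(θ_n).
   Since θ_{n+1} minimizes g_{n+1} over the convex set Θ, the directional
   derivative of g_{n+1} at θ_{n+1} towards any θ ∈ Θ is nonnegative, so
   ∇f(θ_{n+1}, θ - θ_{n+1}) >= -∇h_{n+1}(θ_{n+1})·(θ - θ_{n+1}), and the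
   normalized derivative is bounded below by -|∇h_{n+1}(θ_{n+1})|_1.  Either
   hypothesis bounds |∇h_{n+1}(θ_{n+1})|^2 by a multiple of the decrease
   f(θ_n) - f(θ_{n+1}), which tends to 0 because (f(θ_n)) is nonincreasing and
   bounded below.  For majorants, h_{n+1} >= 0 has an L-Lipschitz gradient, so
   one descent step gives |∂_j h|^2 <= 4L h_{n+1}(θ_{n+1}).  For ρ-strongly
   convex surrogates, ∇h_{n+1}(θ_n) = 0 gives |∇h_{n+1}(θ_{n+1})| <= L‖θ_{n+1}-θ_n‖,
   while strong convexity at the minimizer gives ρ‖θ_{n+1}-θ_n‖^2 <= 4 (decrease). *)

Section EuclideanRow.
Context {R : realType} {p : nat}.
Local Notation V := 'rV[R]_p.

Lemma norm2_ge0 (v : V) : 0 <= norm2 v.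
Proof. exact: sqrtr_ge0. Qed.

Lemma normr_coord_le_norm2 (v : V) j : `|v ord0 j| <= norm2 v.
Proof.
rewrite /norm2 -sqrtr_sqr; apply: ler_wsqrtr.
by rewrite (bigD1 j) //= lerDl; apply: sumr_ge0 => i _; exact: sqr_ge0.
Qed.

Lemma norm2_gt0 (v : V) : v != 0 -> 0 < norm2 v.
Proof.
move=> v0; have [j vj] : exists j, v ord0 j != 0.
  apply/existsP; apply: contraR v0 => /existsPn v_eq0; apply/eqP/rowP => j.
  by move: (v_eq0 j); rewrite negbK mxE => /eqP.
by apply: lt_le_trans (normr_coord_le_norm2 v j); rewrite normr_gt0.
Qed.

Lemma norm2_scale_delta (c : R) j : norm2 (c *: (delta_mx ord0 j : V)) = `|c|.
Proof.
rewrite /norm2 (bigD1 j) //= big1 ?addr0.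
  by rewrite !mxE !eqxx /= mulr1 sqrtr_sqr.
by move=> i ij; rewrite !mxE eqxx /= (negbTE ij) mulr0 expr0n.
Qed.

Lemma diff_grad_sum (h : V -> R) x (v : V) :
  'd h x v = \sum_(j < p) v ord0 j * grad h x ord0 j.
Proof.
rewrite {1}[v]row_sum_delta linear_sum; apply: eq_bigr => j _.
by rewrite linearZ /= /grad mxE.
Qed.

Lemma normr_diff_le (h : V -> R) x (v : V) :
  `|'d h x v| <= (\sum_(j < p) `|grad h x ord0 j|) * norm2 v.
Proof.
rewrite diff_grad_sum mulr_suml; apply: le_trans (ler_norm_sum _ _ _) _.
apply: ler_sum => j _; rewrite normrM mulrC ler_wpM2l //.
exact: normr_coord_le_norm2.
Qed.

Lemma grad_coord_lipschitz (h : V -> R) (L : R) (y z : V) j :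
  (forall y z, norm2 (grad h y - grad h z) <= L * norm2 (y - z)) ->
  `|grad h y ord0 j - grad h z ord0 j| <= L * norm2 (y - z).
Proof.
move=> lip; apply: le_trans (lip y z).
have := normr_coord_le_norm2 (grad h y - grad h z) j.
by rewrite [(grad h y - grad h z) ord0 j]mxE [(- grad h z) ord0 j]mxE.
Qed.

Lemma dquot_cvg_diff (h : V -> R) x v : differentiable h x ->
  dquot h x v @ 0^'+ --> 'd h x v.
Proof.
move=> dh; have := @diff_derivable _ _ _ h x v dh; rewrite /derivable => cv.
have -> : dquot h x v = (fun t : R => t^-1 *: ((h \o shift x) (t *: v) - h x)).
  by apply: boolp.funext => t; rewrite /dquot /= [t *: v + x]addrC mulrC.
rewrite -(deriveE v dh); apply: cvg_trans cv; apply: cvg_app.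
by apply: within_subset => u /= u0; rewrite gt_eqF.
Qed.

Lemma is_derive_line (h : V -> R) (x v : V) (t : R) :
  (forall y, differentiable h y) ->
  is_derive t (1 : R) (fun s : R => h (x + s *: v)) ('d h (x + t *: v) v).
Proof.
move=> dh.
have E : (fun s : R => s^-1 *: (((fun s => h (x + s *: v)) \o shift t) (s *: 1)
                               - h (x + t *: v)))
       = (fun s : R => s^-1 *: ((h \o shift (x + t *: v)) (s *: v) - h (x + t *: v))).
  apply: boolp.funext => s /=; congr (_ *: (h _ - _)).
  by rewrite -[s *: (1:R)]/(s * 1) mulr1 scalerDl addrCA addrA.
split; first by rewrite /derivable E; exact: diff_derivable.
by rewrite /derive E -deriveE.
Qed.

(* The mean-value bound loses the usual factor 1/2 in front of L. *)
Lemma descent_lemma_coord (h : V -> R) (L : R) (x : V) j (s : R) :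
  0 <= L -> (forall y, differentiable h y) ->
  (forall y z, norm2 (grad h y - grad h z) <= L * norm2 (y - z)) ->
  h (x + s *: (delta_mx ord0 j : V)) <= h x + s * grad h x ord0 j + L * s ^+ 2.
Proof.
move=> L0 dh lip; set e : V := delta_mx ord0 j.
pose phi c := h (x + c *: e); pose G c := 'd h (x + c *: e) e.
have GE c : G c = grad h (x + c *: e) ord0 j by rewrite /G /grad mxE.
have dphi c : is_derive c (1 : R) phi (G c) by exact: is_derive_line.
have cphi a b : {within `[a, b], continuous phi}.
  by apply: derivable_within_continuous => c _; case: (dphi c).
have G_lip c : `|G c - G 0| <= L * `|c|.
  rewrite !GE; apply: le_trans (grad_coord_lipschitz _ _ _ _ j lip) _.
  by rewrite scale0r addr0 addrAC subrr add0r norm2_scale_delta.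
have [c [cs mvt]] : exists c, `|c| <= `|s| /\ phi s - phi 0 = G c * s.
  have [s0|s0] := leP 0 s.
    have [c] := MVT_segment s0 (fun c _ => dphi c) (cphi 0 s).
    rewrite in_itv /= => /andP[c0 cs] mvt; exists c; rewrite mvt subr0.
    by rewrite !ger0_norm // (le_trans c0 cs).
  have [c] := MVT_segment (ltW s0) (fun c _ => dphi c) (cphi s 0).
  rewrite in_itv /= => /andP[sc c0] mvt; exists c; split.
    by rewrite !ler0_norm ?(ltW s0) // lerN2.
  by rewrite -opprB mvt add0r mulrN opprK.
have rem_le : (G c - G 0) * s <= L * s ^+ 2.
  apply: le_trans (ler_norm _) _; rewrite normrM.
  apply: le_trans (ler_wpM2r (normr_ge0 s) (G_lip c)) _.
  rewrite -mulrA -(real_normK (num_real s)) expr2.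
  by apply: ler_wpM2l => //; exact: ler_wpM2r.
have phi0 : phi 0 = h x by rewrite /phi scale0r addr0.
have G0 : G 0 = grad h x ord0 j by rewrite GE scale0r addr0.
by rewrite -/(phi s) -phi0 -G0; clearbody phi G; lra.
Qed.

(* Minimize the quadratic upper bound of the descent lemma along the j-th axis. *)
Lemma sqr_grad_coord_le (h : V -> R) (L : R) (x : V) j :
  0 < L -> (forall y, 0 <= h y) -> (forall y, differentiable h y) ->
  (forall y z, norm2 (grad h y - grad h z) <= L * norm2 (y - z)) ->
  grad h x ord0 j ^+ 2 <= 4 * L * h x.
Proof.
move=> L0 h_ge0 dh lip; set a := grad h x ord0 j.
have := le_trans (h_ge0 _)
  (descent_lemma_coord h L x j (- a / (2 * L)) (ltW L0) dh lip).
have -> : h x + - a / (2 * L) * a + L * (- a / (2 * L)) ^+ 2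
          = h x - a ^+ 2 / (4 * L) by field; rewrite gt_eqF.
by rewrite subr_ge0 ler_pdivrMr ?mulr_gt0 // mulrC.
Qed.

Lemma dirder_ge_argmin (Theta : set V) (f g : V -> R) (x y : V) :
  convex_set_rV Theta -> Theta y -> argmin_on Theta g x ->
  differentiable (fun z => g z - f z) x -> dirder_exists f x (y - x) ->
  - 'd (fun z => g z - f z) x (y - x) <= dirder f x (y - x).
Proof.
move=> cvx Ty [Tx x_min] dh f_dir; set h := fun z => g z - f z.
have cv : dquot f x (y - x) + dquot h x (y - x) @ 0^'+ -->
          dirder f x (y - x) + 'd h x (y - x).
  by apply: cvgD; [exact: f_dir | exact: dquot_cvg_diff].
suff : 0 <= dirder f x (y - x) + 'd h x (y - x) by lra.
apply: (cvgr_to_ge cv); near=> t.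
have t0 : 0 < t by near: t; exact: nbhs_right_gt.
have t1 : t <= 1 by near: t; apply: nbhs_right_le; exact: ltr01.
have Tt : Theta (x + t *: (y - x)).
  have := cvx x y t Tx Ty; rewrite (ltW t0) t1 => /(_ isT).
  by rewrite scalerBl scale1r scalerBr addrAC -addrA.
rewrite /dquot /h -mulrDl divr_ge0 ?(ltW t0) //.
by have := x_min _ Tt; rewrite fctE; lra.
Unshelve. all: by end_near.
Qed.

(* Strong convexity at the midpoint of [x, y], against the minimality of x. *)
Lemma argmin_strongly_convex_gap (Theta : set V) (g : V -> R) (rho : R) x y :
  convex_set_rV Theta -> strongly_convex rho g -> argmin_on Theta g x ->
  Theta y -> rho * norm2 (x - y) ^+ 2 <= 4 * (g y - g x).
Proof.
move=> cvx sc [Tx x_min] Ty.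
have half01 : (0 <= 1 / 2 :> R) && (1 / 2 <= 1 :> R) by apply/andP; split; lra.
have := x_min _ (cvx _ _ _ Tx Ty half01).
have := sc x y _ half01; lra.
Qed.

End EuclideanRow.

Section RealSequences.
Context {R : realType}.

Lemma cvgn_decrement0 (u : R^nat) : cvgn u -> (fun n => u n - u n.+1) @ \oo --> 0.
Proof.
move=> /cvg_ex[l ul]; rewrite -(subrr l); apply: cvgB => //.
by rewrite (cvg_shiftS u).
Qed.

Lemma sum_abs_near_le (I : finType) (a : nat -> I -> R) (d : R^nat) (K : R) :
  0 <= K -> (forall n j, a n j ^+ 2 <= K * d n) -> d @ \oo --> 0 ->
  forall e, 0 < e -> \forall n \near \oo, \sum_j `|a n j| <= e.
Proof.
move=> K0 aK d0 e e0; pose e' := e / (#|I|%:R + 1).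
have I0 : 0 <= #|I|%:R :> R by exact: ler0n.
have e'0 : 0 < e' by rewrite divr_gt0 //; lra.
have eta0 : 0 < e' ^+ 2 / (K + 1) by rewrite divr_gt0 ?exprn_gt0 //; lra.
near=> n.
have a_small j : `|a n j| <= e'.
  rewrite -(ler_sqr (normr_ge0 _) (ltW e'0)) real_normK ?num_real //.
  apply: le_trans (aK n j) _.
  have dn : d n <= e' ^+ 2 / (K + 1) by near: n; exact: cvgr_le d0 _ eta0.
  apply: le_trans (ler_wpM2l K0 dn) _.
  rewrite mulrA ler_pdivrMr; last lra.
  by have := sqr_ge0 e'; nra.
apply: le_trans (ler_sum _ (fun j _ => a_small j)) _.
rewrite sumr_const -mulr_natr /e' mulrAC ler_pdivrMr; last lra.
by rewrite ler_wpM2l //; [exact: ltW | lra].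
Unshelve. all: by end_near.
Qed.

Lemma limn_einf_ge0 (u : (\bar R)^nat) :
  (forall e : R, 0 < e -> \forall n \near \oo, ((- e)%:E <= u n)%E) ->
  (0 <= limn_einf u)%E.
Proof.
move=> u_ge; apply/lee_subgt0Pr => e e0; rewrite sub0e -EFinN.
have [N _ uN] := u_ge e e0.
rewrite limn_einf_lim (cvg_lim _ (cvg_einfs_sup (u := u))) //.
apply: le_trans (ereal_sup_ubound _); last by exists N.
by apply: le_ereal_inf_tmp => _ [k /= Nk <-]; exact: uN.
Qed.

End RealSequences.

Section MajorizationMinimization.
Context {R : realType} {p : nat}.
Context {Theta : set 'rV[R]_p} {f : 'rV[R]_p -> R} {L : R}
  {g : nat -> 'rV[R]_p -> R} {theta : nat -> 'rV[R]_p}.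
Hypothesis Theta_convex : convex_set_rV Theta.
Hypothesis theta0_in : Theta (theta 0%N).
Hypothesis theta_argmin : forall n, (1 <= n)%N -> argmin_on Theta (g n) (theta n).
Hypothesis g_surrogate :
  forall n, (1 <= n)%N -> first_order_surrogate Theta L f (theta n.-1) (g n).

Local Notation h n := (fun y => g n y - f y).

Lemma theta_in n : Theta (theta n).
Proof. by case: n => [|n] //; have [] := theta_argmin n.+1 isT. Qed.

Lemma surrogate_tight n : g n.+1 (theta n) = f (theta n).
Proof.
have [_ [_ [_ [h0 _]]]] := g_surrogate n.+1 isT.
by apply/eqP; rewrite -subr_eq0; apply/eqP.
Qed.

Lemma f_le_surrogate_next n : f (theta n.+1) <= g n.+1 (theta n.+1).
Proof.
have [g_ge _] := g_surrogate n.+1 isT.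
exact: g_ge (theta_argmin n.+1 isT).
Qed.

Lemma surrogate_next_le n : g n.+1 (theta n.+1) <= f (theta n).
Proof.
have [_ theta_min] := theta_argmin n.+1 isT.
by rewrite -surrogate_tight; exact: theta_min (theta_in n).
Qed.

Lemma f_theta_nonincreasing n : f (theta n.+1) <= f (theta n).
Proof. exact: le_trans (f_le_surrogate_next n) (surrogate_next_le n). Qed.

Lemma residual_le_step n j :
  `|grad (h n.+1) (theta n.+1) ord0 j| <= L * norm2 (theta n.+1 - theta n).
Proof.
have [_ [_ [lip [_ grad0]]]] := g_surrogate n.+1 isT.
have := grad_coord_lipschitz _ _ (theta n.+1) (theta n) j lip.
by rewrite grad0 (_ : (0 : 'rV[R]_p) ord0 j = 0) ?mxE // subr0.
Qed.

Lemma residual_sqr_le_majorant :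
  (forall n, (1 <= n)%N -> majorant f (g n)) ->
  forall n j, grad (h n.+1) (theta n.+1) ord0 j ^+ 2
              <= 4 * Num.max L 1 * (f (theta n) - f (theta n.+1)).
Proof.
move=> maj n j; have [_ [dh [lip _]]] := g_surrogate n.+1 isT.
have L'0 : 0 < Num.max L 1 by rewrite lt_max ltr01 orbT.
have lip' y z : norm2 (grad (h n.+1) y - grad (h n.+1) z)
                <= Num.max L 1 * norm2 (y - z).
  by apply: le_trans (lip y z) _; rewrite ler_wpM2r ?norm2_ge0 ?le_max ?lexx.
have h_ge0 y : 0 <= g n.+1 y - f y by rewrite subr_ge0; exact: maj.
apply: le_trans (sqr_grad_coord_le _ _ (theta n.+1) j L'0 h_ge0 dh lip') _.
apply: ler_wpM2l; first by rewrite mulr_ge0 // ltW.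
by have := surrogate_next_le n; lra.
Qed.

Lemma residual_sqr_le_strongly_convex (rho : R) :
  0 < rho -> (forall n, (1 <= n)%N -> strongly_convex rho (g n)) ->
  forall n j, grad (h n.+1) (theta n.+1) ord0 j ^+ 2
              <= L ^+ 2 * (4 / rho) * (f (theta n) - f (theta n.+1)).
Proof.
move=> rho0 sc n j; set D := norm2 (theta n.+1 - theta n).
have step : rho * D ^+ 2 <= 4 * (f (theta n) - f (theta n.+1)).
  have := argmin_strongly_convex_gap _ _ _ _ _ Theta_convex (sc n.+1 isT)
            (theta_argmin n.+1 isT) (theta_in n).
  by rewrite surrogate_tight -/D; have := f_le_surrogate_next n; lra.
have res : grad (h n.+1) (theta n.+1) ord0 j ^+ 2 <= L ^+ 2 * D ^+ 2.
  have res_le := residual_le_step n j.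
  have := ler_pM (normr_ge0 _) (normr_ge0 _) res_le res_le.
  by rewrite -expr2 real_normK ?num_real // -expr2 exprMn.
apply: le_trans res _; rewrite -mulrA ler_wpM2l ?sqr_ge0 //.
by rewrite mulrAC ler_pdivlMr // mulrC.
Qed.

Lemma residual_sqr_le_decrement :
  (forall n, (1 <= n)%N -> majorant f (g n)) \/
  (exists rho, 0 < rho /\ forall n, (1 <= n)%N -> strongly_convex rho (g n)) ->
  exists2 K, 0 <= K & forall n j, grad (h n.+1) (theta n.+1) ord0 j ^+ 2
                                  <= K * (f (theta n) - f (theta n.+1)).
Proof.
case=> [maj|[rho [rho0 sc]]].
  exists (4 * Num.max L 1); last exact: residual_sqr_le_majorant.
  by rewrite mulr_ge0 // le_max ler01 orbT.
exists (L ^+ 2 * (4 / rho)); last exact: residual_sqr_le_strongly_convex.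
by rewrite mulr_ge0 ?sqr_ge0 // divr_ge0 // ltW.
Qed.

Hypothesis f_dirder :
  forall x y, Theta x -> Theta y -> dirder_exists f x (y - x).

Lemma dirder_ratio_ge_residual n y : Theta y -> y != theta n.+1 ->
  - \sum_(j < p) `|grad (h n.+1) (theta n.+1) ord0 j|
    <= dirder f (theta n.+1) (y - theta n.+1) / norm2 (y - theta n.+1).
Proof.
move=> Ty y_neq; have [_ [dh _]] := g_surrogate n.+1 isT.
have dist_gt0 : 0 < norm2 (y - theta n.+1) by rewrite norm2_gt0 // subr_eq0.
rewrite ler_pdivlMr // mulNr.
apply: le_trans (dirder_ge_argmin _ _ _ _ _ Theta_convex Ty
                   (theta_argmin n.+1 isT) (dh _) (f_dirder _ _ (theta_in n.+1) Ty)).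
by rewrite lerN2; exact: le_trans (ler_norm _) (normr_diff_le _ _ _).
Qed.

Context {m : R}.
Hypothesis f_ge : forall x, m <= f x.

Lemma f_theta_decrement_cvg0 :
  (fun n => f (theta n) - f (theta n.+1)) @ \oo --> 0.
Proof.
apply: cvgn_decrement0; apply: nonincreasing_is_cvgn.
  by apply/nonincreasing_seqP; exact: f_theta_nonincreasing.
by exists m => _ [n _ <-].
Qed.

Lemma stationarity_near :
  (forall n, (1 <= n)%N -> majorant f (g n)) \/
  (exists rho, 0 < rho /\ forall n, (1 <= n)%N -> strongly_convex rho (g n)) ->
  forall e, 0 < e -> \forall n \near \oo, forall y, Theta y -> y != theta n ->
    - e <= dirder f (theta n) (y - theta n) / norm2 (y - theta n).
Proof.
move=> /residual_sqr_le_decrement[K K0 resK] e e0.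
have [N _ small] := sum_abs_near_le _ _ _ _ K0 resK f_theta_decrement_cvg0 _ e0.
exists N.+1 => // -[//|n] /= Nn y Ty y_neq.
apply: le_trans (dirder_ratio_ge_residual _ _ Ty y_neq).
by rewrite lerN2; exact: small.
Qed.

End MajorizationMinimization.

Theorem proposition2p1 (R : realType) (p : nat) (Theta : set 'rV[R]_p)
  (f : 'rV[R]_p -> R) (L : R) (g : nat -> 'rV[R]_p -> R)
  (theta : nat -> 'rV[R]_p) :
  convex_set_rV Theta ->
  continuous f ->
  (exists m : R, forall x, m <= f x) ->
  (forall th th', Theta th -> Theta th' -> dirder_exists f th (th' - th)) ->
  Theta (theta 0%N) ->
  (forall n, (1 <= n)%N -> argmin_on Theta (g n) (theta n)) ->
  (forall n, (1 <= n)%N ->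
     first_order_surrogate Theta L f (theta n.-1) (g n)) ->
  ((forall n, (1 <= n)%N -> majorant f (g n)) \/
   (exists rho : R, 0 < rho /\
      forall n, (1 <= n)%N -> strongly_convex rho (g n))) ->
  (forall n, f (theta n.+1) <= f (theta n)) /\
  (0 <= limn_einf (fun n =>
          ereal_inf [set ((dirder f (theta n) (th - theta n)
                            / norm2 (th - theta n))%:E)
                     | th in Theta `\ theta n]))%E.
Proof.
move=> cvx _ [m f_ge] f_dirder theta0 argmin surr maj_or_sc.
split; first exact: f_theta_nonincreasing theta0 argmin surr.
apply: limn_einf_ge0 => e e0.
apply: filterS
  (stationarity_near cvx theta0 argmin surr f_dirder f_ge maj_or_sc _ e0).
move=> n ratio_ge; apply: le_ereal_inf_tmp => _ [y [Ty y_neq] <-].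
by rewrite lee_fin; apply: ratio_ge => //; apply/eqP.
Qed.
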